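(* Assume $\kappa\le\lambda<0$, nonnegative progress values, $w\ge0$, and that a feasible trajectory pair exists. Let $(i^{cg},j^{cg})$ be a Stackelberg equilibrium (P1 leader) of the cooperative game $(A^c,B^c)$. Then $(i^{cg},j^{cg})$ is a Nash equilibrium of the blocking game $(A^b,B^b)$. Moreover, if a blocking pair $(i^b,j^b)$ (relative to $(i^{cg},j^{cg})$) is a Nash equilibrium of the cooperative game, then it is a Nash equilibrium of the blocking game.
   Context: Abstract two-player racing set-up. Player 1 (P1, the leader) chooses a trajectory $i\in\Gamma^1=\{1,\dots,n\}$, player 2 (P2) chooses $j\in\Gamma^2=\{1,\dots,m\}$. Each trajectory has a progress value $P^1_i\ge 0$ (resp. $P^2_j\ge 0$). Each trajectory is either on track or off track, and each pair $(i,j)$ either collides or not. A pair $(i,j)$ is feasible if $i$ and $j$ are both on track and $(i,j)$ does not collide. Constants $\kappa\le\lambda<0$ and $w\ge0$ are fixed. Cooperative game: $a^{c}_{i,j}=\kappa$ if $i$ is off track; otherwise $\lambda$ if $(i,j)$ collides; otherwise $P^1_i$. $b^{c}_{i,j}=\kappa$ if $j$ is off track; otherwise $\lambda$ if $(i,j)$ collides; otherwise $P^2_j$. Blocking game: $a^{b}_{i,j}=\kappa$ if $i$ is off track; otherwise $\lambda$ if $(i,j)$ collides; otherwise $P^1_i$ if $P^1_i<P^2_j$; otherwise $P^1_i+w$. $b^{b}_{i,j}=\kappa$ if $j$ is off track; otherwise $\lambda$ if $(i,j)$ collides; otherwise $P^2_j$ if $P^1_i\ge P^2_j$; otherwise $P^2_j+w$.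 Blocking pair (relative to a fixed Stackelberg equilibrium $(i^{cg},j^{cg})$ of the cooperative game): a pair $(i,j)$ such that (i) $P^1_{i^{cg}}<P^2_{j^{cg}}$; (ii) $P^1_i>P^2_j$; (iii) $(i,j)$ is feasible; (iv) for every $j^c\in\Gamma^2$ with $P^2_{j^c}>P^2_j$ one has $b^{c}_{i,j^c}\le\lambda$. For a bimatrix game $(A,B)$: $R(i)=\arg\max_{j}b_{i,j}$; $(i^*,j^* )$ is a Stackelberg equilibrium with P1 as leader if $i^*\in\arg\max_{i}\min_{j\in R(i)}a_{i,j}$ and $j^*\in R(i^* )$; $(i^*,j^* )$ is a Nash equilibrium if $a_{i^*,j^*}\ge a_{i,j^*}$ for all $i$ and $b_{i^*,j^*}\ge b_{i^*,j}$ for all $j$. Only pure strategies are considered. *)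

From Stdlib Require Import Reals Lra Lia.
Open Scope R_scope.

(* Abstract racing set-up. Trajectories of P1 are the naturals i < n,
   those of P2 the naturals j < m (i.e. Gamma^1 = {1..n} re-indexed from 0). *)
Record race := Race {
  n : nat;
  m : nat;
  P1 : nat -> R;
  P2 : nat -> R;
  on1 : nat -> bool;
  on2 : nat -> bool;
  coll : nat -> nat -> bool
}.

Definition feasible (g : race) (i j : nat) : Prop :=
  on1 g i = true /\ on2 g j = true /\ coll g i j = false.

Definition a_c (g : race) (kappa lambda : R) (i j : nat) : R :=
  if negb (on1 g i) then kappa
  else if coll g i j then lambda
  else P1 g i.

Definition b_c (g : race) (kappa lambda : R) (i j : nat) : R :=
  if negb (on2 g j) then kappa
  else if coll g i j then lambda
  else P2 g j.

Definition a_b (g : race) (kappa lambda w : R) (i j : nat) : R :=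
  if negb (on1 g i) then kappa
  else if coll g i j then lambda
  else if Rlt_dec (P1 g i) (P2 g j) then P1 g i
  else P1 g i + w.

Definition b_b (g : race) (kappa lambda w : R) (i j : nat) : R :=
  if negb (on2 g j) then kappa
  else if coll g i j then lambda
  else if Rge_dec (P1 g i) (P2 g j) then P2 g j
  else P2 g j + w.

Definition best_resp (m : nat) (B : nat -> nat -> R) (i j : nat) : Prop :=
  (j < m)%nat /\ forall j', (j' < m)%nat -> B i j' <= B i j.

Definition is_min_over (S : nat -> Prop) (f : nat -> R) (v : R) : Prop :=
  (exists j, S j /\ f j = v) /\ (forall j, S j -> v <= f j).

Definition stackelberg (n m : nat) (A B : nat -> nat -> R) (ist jst : nat) : Prop :=
  (ist < n)%nat /\
  (exists vst, is_min_over (best_resp m B ist) (A ist) vst /\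
     forall i v, (i < n)%nat -> is_min_over (best_resp m B i) (A i) v -> v <= vst) /\
  best_resp m B ist jst.

Definition nash (n m : nat) (A B : nat -> nat -> R) (ist jst : nat) : Prop :=
  (ist < n)%nat /\ (jst < m)%nat /\
  (forall i, (i < n)%nat -> A i jst <= A ist jst) /\
  (forall j, (j < m)%nat -> B ist j <= B ist jst).

Definition blocking_pair (g : race) (kappa lambda : R) (icg jcg i j : nat) : Prop :=
  (i < n g)%nat /\ (j < m g)%nat /\
  P1 g icg < P2 g jcg /\
  P1 g i > P2 g j /\
  feasible g i j /\
  (forall jc, (jc < m g)%nat -> P2 g jc > P2 g j -> b_c g kappa lambda i jc <= lambda).

(* A feasible pair that is a Nash equilibrium of the cooperative game stays one
   in the blocking game: on feasible pairs the blocking payoff of a player is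
   their progress plus a bonus w for being ahead, which is nondecreasing in
   their own progress, while every infeasible pair pays at most lambda < 0.
   Both claims reduce to this.  For the blocking pair it applies directly; for
   the Stackelberg equilibrium (i_cg, j_cg) one shows it is feasible and a
   cooperative Nash equilibrium: as soon as a leader trajectory i admits a
   feasible partner, all of P2's best responses to i avoid collisions and
   the off-track penalty, so the Stackelberg value of i is exactly P1 i. *)
From Stdlib Require Import Reals Lra Lia.
Open Scope R_scope.

Lemma exists_argmax_lt (f : nat -> R) (m : nat) : (0 < m)%nat ->
  exists j, (j < m)%nat /\ forall j', (j' < m)%nat -> f j' <= f j.
Proof.
  induction m as [|m IH]; intros Hm; [lia|].
  destruct (Nat.eq_dec m 0) as [->|Hm0].
  - exists 0%nat; split; [lia|]; intros j' Hj'.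
    replace j' with 0%nat by lia; lra.
  - destruct IH as [j [Hj Hmax]]; [lia|].
    destruct (Rle_dec (f m) (f j)).
    + exists j; split; [lia|]; intros j' Hj'.
      destruct (Nat.eq_dec j' m) as [->|]; [lra|apply Hmax; lia].
    + exists m; split; [lia|]; intros j' Hj'.
      destruct (Nat.eq_dec j' m) as [->|]; [lra|].
      assert (f j' <= f j) by (apply Hmax; lia); lra.
Qed.

Section Payoffs.

Variables (g : race) (kappa lambda w : R).
Hypothesis kappa_le_lambda : kappa <= lambda.

Lemma a_c_cases i j :
  a_c g kappa lambda i j <= lambda \/ (on1 g i = true /\ coll g i j = false).
Proof. unfold a_c; destruct (on1 g i), (coll g i j); simpl; auto; lra. Qed.

Lemma b_c_cases i j :
  b_c g kappa lambda i j <= lambda \/ (on2 g j = true /\ coll g i j = false).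
Proof. unfold b_c; destruct (on2 g j), (coll g i j); simpl; auto; lra. Qed.

Lemma a_b_cases i j :
  a_b g kappa lambda w i j <= lambda \/ (on1 g i = true /\ coll g i j = false).
Proof. unfold a_b; destruct (on1 g i), (coll g i j); simpl; auto; lra. Qed.

Lemma b_b_cases i j :
  b_b g kappa lambda w i j <= lambda \/ (on2 g j = true /\ coll g i j = false).
Proof. unfold b_b; destruct (on2 g j), (coll g i j); simpl; auto; lra. Qed.

Lemma a_c_safe i j : on1 g i = true -> coll g i j = false ->
  a_c g kappa lambda i j = P1 g i.
Proof. intros Hon Hcoll; unfold a_c; rewrite Hon, Hcoll; reflexivity. Qed.

Lemma b_c_safe i j : on2 g j = true -> coll g i j = false ->
  b_c g kappa lambda i j = P2 g j.
Proof. intros Hon Hcoll; unfold b_c; rewrite Hon, Hcoll; reflexivity. Qed.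

Lemma a_b_safe i j : on1 g i = true -> coll g i j = false ->
  a_b g kappa lambda w i j =
  if Rlt_dec (P1 g i) (P2 g j) then P1 g i else P1 g i + w.
Proof. intros Hon Hcoll; unfold a_b; rewrite Hon, Hcoll; reflexivity. Qed.

Lemma b_b_safe i j : on2 g j = true -> coll g i j = false ->
  b_b g kappa lambda w i j =
  if Rge_dec (P1 g i) (P2 g j) then P2 g j else P2 g j + w.
Proof. intros Hon Hcoll; unfold b_b; rewrite Hon, Hcoll; reflexivity. Qed.

End Payoffs.

Lemma lead_bonus_monotone (w c x y : R) : 0 <= w -> x <= y ->
  (if Rlt_dec x c then x else x + w) <= (if Rlt_dec y c then y else y + w).
Proof. intros; destruct (Rlt_dec x c), (Rlt_dec y c); lra. Qed.

Lemma trail_bonus_monotone (w c x y : R) : 0 <= w -> x <= y ->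
  (if Rge_dec c x then x else x + w) <= (if Rge_dec c y then y else y + w).
Proof. intros; destruct (Rge_dec c x), (Rge_dec c y); lra. Qed.

Section Equilibria.

Variables (g : race) (kappa lambda w : R).
Hypotheses (kappa_le_lambda : kappa <= lambda) (lambda_lt0 : lambda < 0).

Let A_c := a_c g kappa lambda.
Let B_c := b_c g kappa lambda.

Theorem nash_blocking_of_nash_coop i0 j0 : 0 <= w ->
  0 <= P1 g i0 -> 0 <= P2 g j0 -> feasible g i0 j0 ->
  nash (n g) (m g) A_c B_c i0 j0 ->
  nash (n g) (m g) (a_b g kappa lambda w) (b_b g kappa lambda w) i0 j0.
Proof.
  intros Hw HP1 HP2 [Hon1 [Hon2 Hcoll]] [Hi0 [Hj0 [HA HB]]].
  repeat split; auto.
  - intros i Hi. rewrite (a_b_safe g kappa lambda w i0 j0 Hon1 Hcoll).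
    destruct (a_b_cases g kappa lambda w kappa_le_lambda i j0) as [Hneg|[Hon Hcl]].
    + destruct Rlt_dec; lra.
    + rewrite (a_b_safe g kappa lambda w i j0 Hon Hcl).
      apply lead_bonus_monotone; auto.
      specialize (HA i Hi); unfold A_c in HA.
      rewrite !a_c_safe in HA; auto.
  - intros j Hj. rewrite (b_b_safe g kappa lambda w i0 j0 Hon2 Hcoll).
    destruct (b_b_cases g kappa lambda w kappa_le_lambda i0 j) as [Hneg|[Hon Hcl]].
    + destruct Rge_dec; lra.
    + rewrite (b_b_safe g kappa lambda w i0 j Hon Hcl).
      apply trail_bonus_monotone; auto.
      specialize (HB j Hj); unfold B_c in HB.
      rewrite !b_c_safe in HB; auto.
Qed.

(* The feasible partner j' secures P2 a payoff >= 0 > lambda, which no colliding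
   or off-track response reaches. *)
Lemma best_resp_coop_safe i j j' :
  (j' < m g)%nat -> on2 g j' = true -> coll g i j' = false -> 0 <= P2 g j' ->
  best_resp (m g) B_c i j -> on2 g j = true /\ coll g i j = false.
Proof.
  intros Hj' Hon Hcl HP [_ Hmax]. specialize (Hmax j' Hj'); unfold B_c in Hmax.
  rewrite (b_c_safe g kappa lambda i j' Hon Hcl) in Hmax.
  destruct (b_c_cases g kappa lambda kappa_le_lambda i j); auto; lra.
Qed.

Lemma stackelberg_value_safe i j' :
  (j' < m g)%nat -> on1 g i = true -> on2 g j' = true -> coll g i j' = false ->
  0 <= P2 g j' -> is_min_over (best_resp (m g) B_c i) (A_c i) (P1 g i).
Proof.
  intros Hj' Hon1 Hon2 Hcl HP.
  assert (Hval : forall j, best_resp (m g) B_c i j -> A_c i j = P1 g i).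
  { intros j Hbr.
    destruct (best_resp_coop_safe i j j' Hj' Hon2 Hcl HP Hbr) as [_ Hcl'].
    apply a_c_safe; auto. }
  split.
  - destruct (exists_argmax_lt (B_c i) (m g)) as [j [Hj Hmax]]; [lia|].
    exists j; split; [split; auto|]; apply Hval; split; auto.
  - intros j Hbr; rewrite Hval; auto; lra.
Qed.

Section Stackelberg.

Hypotheses (HP1 : forall i, (i < n g)%nat -> 0 <= P1 g i)
           (HP2 : forall j, (j < m g)%nat -> 0 <= P2 g j).
Variables (icg jcg : nat).
Hypothesis Hse : stackelberg (n g) (m g) A_c B_c icg jcg.

Lemma stackelberg_value_ge_progress i j' vst :
  (i < n g)%nat -> (j' < m g)%nat -> feasible g i j' ->
  (forall i v, (i < n g)%nat -> is_min_over (best_resp (m g) B_c i) (A_c i) v -> v <= vst) ->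
  P1 g i <= vst.
Proof.
  intros Hi Hj' [Hon1 [Hon2 Hcl]] Hmax.
  apply (Hmax i); [exact Hi|].
  apply (stackelberg_value_safe i j'); auto.
Qed.

(* If P2 at j_cg were off track, j_cg would only earn kappa, so a feasible j0
   would be a best response too, which the leader's value forbids. *)
Lemma stackelberg_coop_feasible :
  (exists i j, (i < n g)%nat /\ (j < m g)%nat /\ feasible g i j) ->
  feasible g icg jcg.
Proof.
  intros [i0 [j0 [Hi0 [Hj0 Hf0]]]].
  destruct Hse as [Hicg [[vst [[_ Hvmin] Hvmax]] [Hjcg Hbr]]].
  assert (Hv0 : 0 <= vst).
  { pose proof (HP1 i0 Hi0).
    enough (P1 g i0 <= vst) by lra.
    exact (stackelberg_value_ge_progress i0 j0 vst Hi0 Hj0 Hf0 Hvmax). }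
  assert (Hresp_safe : forall j, best_resp (m g) B_c icg j ->
            on1 g icg = true /\ coll g icg j = false).
  { intros j Hj; specialize (Hvmin j Hj).
    destruct (a_c_cases g kappa lambda kappa_le_lambda icg j); auto; unfold A_c in *; lra. }
  destruct (Hresp_safe jcg) as [Hon1 Hcl]; [split; auto|].
  repeat split; auto.
  destruct (on2 g jcg) eqn:Hoff; auto; exfalso.
  destruct Hf0 as [_ [Hon2_0 _]].
  assert (Hkappa : B_c icg jcg = kappa) by (unfold B_c, b_c; rewrite Hoff; reflexivity).
  assert (Hj0_ge : kappa <= B_c icg j0).
  { unfold B_c, b_c; rewrite Hon2_0; simpl.
    pose proof (HP2 j0 Hj0); destruct (coll g icg j0); lra. }
  assert (Hj0_br : best_resp (m g) B_c icg j0).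
  { split; auto; intros j' Hj'; specialize (Hbr j' Hj'); lra. }
  destruct (Hresp_safe j0 Hj0_br) as [_ Hcl0].
  pose proof (HP2 j0 Hj0).
  unfold B_c in Hj0_ge, Hkappa; rewrite b_c_safe in Hj0_ge; auto.
  specialize (Hbr j0 Hj0); unfold B_c in Hbr; rewrite b_c_safe in Hbr; auto; lra.
Qed.

Lemma stackelberg_coop_nash :
  feasible g icg jcg -> nash (n g) (m g) A_c B_c icg jcg.
Proof.
  intros [Hon1 [Hon2 Hcl]].
  destruct Hse as [Hicg [[vst [[_ Hvmin] Hvmax]] [Hjcg Hbr]]].
  repeat split; auto.
  intros i Hi. unfold A_c; rewrite (a_c_safe g kappa lambda icg jcg); auto.
  destruct (a_c_cases g kappa lambda kappa_le_lambda i jcg) as [Hneg|[Hon Hcl']].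
  - pose proof (HP1 icg Hicg); lra.
  - rewrite a_c_safe; auto.
    assert (Hvst : vst <= P1 g icg).
    { specialize (Hvmin jcg (conj Hjcg Hbr)); unfold A_c in Hvmin.
      rewrite a_c_safe in Hvmin; auto. }
    enough (P1 g i <= vst) by lra.
    apply (stackelberg_value_ge_progress i jcg); auto; split; auto.
Qed.

End Stackelberg.

End Equilibria.

Theorem theorem2 (g : race) (kappa lambda w : R) :
  kappa <= lambda -> lambda < 0 -> 0 <= w ->
  (forall i, (i < n g)%nat -> 0 <= P1 g i) ->
  (forall j, (j < m g)%nat -> 0 <= P2 g j) ->
  (exists i j, (i < n g)%nat /\ (j < m g)%nat /\ feasible g i j) ->
  forall icg jcg,
    stackelberg (n g) (m g) (a_c g kappa lambda) (b_c g kappa lambda) icg jcg ->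
    nash (n g) (m g) (a_b g kappa lambda w) (b_b g kappa lambda w) icg jcg /\
    (forall ib jb,
       blocking_pair g kappa lambda icg jcg ib jb ->
       nash (n g) (m g) (a_c g kappa lambda) (b_c g kappa lambda) ib jb ->
       nash (n g) (m g) (a_b g kappa lambda w) (b_b g kappa lambda w) ib jb).
Proof.
  intros Hk Hl Hw HP1 HP2 Hex icg jcg Hse.
  assert (Hfeas := stackelberg_coop_feasible g kappa lambda Hk Hl HP1 HP2 icg jcg Hse Hex).
  pose proof Hse as [Hicg [_ [Hjcg _]]].
  split.
  - apply nash_blocking_of_nash_coop; auto.
    apply stackelberg_coop_nash; auto.
  - intros ib jb [Hib [Hjb [_ [_ [Hfb _]]]]] Hnash.
    apply nash_blocking_of_nash_coop; auto.
Qed.
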